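(* Let $k\geq 2$ and $i\in[k-1]$ be integers. Let $G$ be a graph which does not contain the configuration $(\dagger^{(1)})^k_2$, and let $f=u_1\dots u_{k-1}$ be a copy of $K_{k-1}$ in $G$ which is a copy of $K_{k-1}$ of two distinct $K_{k+1}$-components $C_1$ and $C_2$. Let $uv$ be an edge of $G$ such that $fu,fv\in C_1$, and let $w$ be a vertex of $G$ such that $fw\in C_2$. Then (i) $\Gamma(u_1,\dots,u_{i-1},u_{i+1},\dots,u_{k-1},w,u,v)$ is an independent set; (ii) $\Gamma(x_1,\dots,x_{i-1},u_{i+1},\dots,u_{k-1},w,u,v)$ is an independent set for any copy $x_1\dots x_{i-1}$ of $K_{i-1}$ in $G$ such that $x_j\in\Gamma(u_{j+1},\dots,u_{k-1},w,u,v)$ for each $j<i$.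
   Context: A $K_{k+1}$-walk in $G$ is a sequence of copies of $K_k$ in which consecutive copies lie in a common copy of $K_{k+1}$; the endpoints are then $K_{k+1}$-connected, and the equivalence classes of copies of $K_k$ are the $K_{k+1}$-components. A copy of $K_{k-1}$ is a copy of $K_{k-1}$ of a component $C$ if it extends to a copy of $K_k$ in $C$. For a clique $f$ and a vertex $x$ adjacent to all of $f$, $fx$ is the clique $f\cup\{x\}$, and $fx\in C$ means this copy of $K_k$ lies in $C$. $\Gamma(x_1,\dots,x_s)$ is the common neighbourhood. $G$ contains the configuration $(\dagger^{(1)})^k_2$ if there are (not necessarily distinct) vertices $u_1,\dots,u_k,v_2,w_{21}$ such that $u_1\dots u_k$ is a copy of $K_k$ in some $K_{k+1}$-component $C$, while $u_1v_2u_3\dots u_k$ and $u_2w_{21}u_3\dots u_k$ are copies of $K_k$ in $G$ not in $C$. *)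

(* Finite simple graphs given by a symmetric irreflexive
   relation on a finType; cliques are represented as finite vertex sets. *)
From Stdlib Require Import Relations.
From mathcomp Require Import all_boot.
Set Implicit Arguments. Unset Strict Implicit. Unset Printing Implicit Defensive.

Section Graphs.
Variable T : finType.
Variable e : rel T.

Definition simple_graph : Prop := (forall x y, e x y = e y x) /\ (forall x, ~~ e x x).

Definition clique (A : {set T}) : bool :=
  [forall x in A, forall y in A, (x != y) ==> e x y].

Definition Kcopy (k : nat) (A : {set T}) : bool := clique A && (#|A| == k).

Definition kstep (k : nat) (A B : {set T}) : Prop :=
  Kcopy k A /\ Kcopy k B /\ exists D : {set T}, Kcopy k.+1 D /\ A \subset D /\ B \subset D.

Definition kconn (k : nat) (A B : {set T}) : Prop :=
  Kcopy k A /\ clos_refl_trans _ (kstep k) A B.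

Definition kcomponent (k : nat) (C : {set {set T}}) : Prop :=
  exists A0, Kcopy k A0 /\ forall B, B \in C <-> kconn k A0 B.

Definition ext (f : {set T}) (x : T) : {set T} := x |: f.

Definition Kminus_of (k : nat) (C : {set {set T}}) (f : {set T}) : Prop :=
  Kcopy k.-1 f /\ exists x, [forall y in f, e y x] && (ext f x \in C).

Definition Gamma (S : {set T}) : {set T} := [set y | [forall x in S, e x y]].

Definition independent (A : {set T}) : Prop :=
  forall x y, x \in A -> y \in A -> ~~ e x y.

Definition seqset (s : nat -> T) (a b : nat) : {set T} :=
  \bigcup_(a <= j < b.+1) [set s j].

Definition dagger1_k2 (k : nat) : Prop :=
  exists (u : nat -> T) (v2 w21 : T) (C : {set {set T}}),
    [/\ kcomponent k C,
        Kcopy k (seqset u 1 k) /\ seqset u 1 k \in C,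
        Kcopy k (u 1 |: (v2 |: seqset u 3 k)) /\ (u 1 |: (v2 |: seqset u 3 k)) \notin C &
        Kcopy k (u 2 |: (w21 |: seqset u 3 k)) /\ (u 2 |: (w21 |: seqset u 3 k)) \notin C].

End Graphs.

(* Write k = n + 2 and call a copy S of K_(n+1) straddling if v is adjacent to all of S,
   Su lies in C1 and Sw lies in C2; the clique f straddles.  Exchanging a vertex a of S
   for a common neighbour b of S - a, u, v and w keeps S straddling: Su, (S - a)uv and
   (S - a)ub are successively K_(k+1)-connected, and (S - a)wb lies in C2 since otherwise
   (S - a)aw in C2, (S - a)au not in C2 and (S - a)wb not in C2 would form the forbidden
   configuration.  Conversely no common neighbour z of a straddling S, u and w exists:
   Su, Sz and Sw would all be connected in C1.  Now if y z is an edge in the common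
   neighbourhood of (ii), replace u_1, ..., u_(i-1) by x_1, ..., x_(i-1) one at a time and
   then u_i by y; z is a forbidden common neighbour of the result.  For (i) only the last
   exchange is needed. *)

From Stdlib Require Import Relations.
From mathcomp Require Import all_boot zify.
Set Implicit Arguments. Unset Strict Implicit. Unset Printing Implicit Defensive.

Section Seqset.
Variables (T : finType) (s : nat -> T).

Lemma seqsetE a b : seqset s a b = [set:: map s (index_iota a b.+1)].
Proof.
rewrite /seqset; elim: (index_iota a b.+1) => [|j l IH].
  by rewrite big_nil; apply/setP => x; rewrite !inE.
by rewrite big_cons IH set_cons.
Qed.

Lemma seqsetP a b y :
  reflect (exists2 m, a <= m <= b & y = s m) (y \in seqset s a b).
Proof.
rewrite seqsetE inE; apply: (iffP mapP).
  by move=> [m]; rewrite mem_index_iota ltnS => Hm ->; exists m.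
by move=> [m Hm ->]; exists m; rewrite // mem_index_iota ltnS.
Qed.

Lemma seqset0 a b : b < a -> seqset s a b = set0.
Proof. by move=> ba; apply/setP => y; rewrite inE; apply/seqsetP => [[m]]; lia. Qed.

Lemma seqsetS a b a' b' : a <= a' -> b' <= b -> seqset s a' b' \subset seqset s a b.
Proof.
by move=> aa bb; apply/subsetP => y /seqsetP [m Hm ->]; apply/seqsetP; exists m => //; lia.
Qed.

Lemma seqset_split a m b : a <= m.+1 <= b.+1 ->
  seqset s a b = seqset s a m :|: seqset s m.+1 b.
Proof.
move=> H; apply/setP => y; rewrite inE; apply/seqsetP/orP.
- move=> [p Hp ->]; case: (ltnP m p) => Hpm; [right | left];
  by apply/seqsetP; exists p => //; lia.
- by case=> /seqsetP [p Hp ->]; exists p => //; lia.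
Qed.

Lemma seqset1 a : seqset s a a = [set s a].
Proof.
apply/setP => y; rewrite !inE; apply/seqsetP/eqP => [[m Hm ->] | ->].
  by have -> : m = a by lia.
by exists a; rewrite /= ?leqnn.
Qed.

Lemma seqset_consl a b : a <= b -> seqset s a b = s a |: seqset s a.+1 b.
Proof. by move=> ab; rewrite (@seqset_split a a) ?seqset1 //; lia. Qed.

Lemma seqset_rconsr a b : a <= b.+1 -> seqset s a b.+1 = s b.+1 |: seqset s a b.
Proof. by move=> ab; rewrite (@seqset_split a b) ?seqset1 1?setUC //; lia. Qed.

Lemma card_seqset a b : #|seqset s a b| <= b.+1 - a.
Proof.
rewrite seqsetE cardsE; apply: leq_trans (card_size _) _.
by rewrite size_map size_iota.
Qed.

Lemma seqset_notin a b j : #|seqset s a b| = b.+1 - a -> a <= j.+1 <= b ->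
  s j.+1 \notin seqset s a j.
Proof.
move=> cardS hj; move: cardS; rewrite (@seqset_split a j.+1) ?seqset_rconsr; try lia.
have := (leq_card_setU (s j.+1 |: seqset s a j) (seqset s j.+2 b)).1.
rewrite cardsU1; have := card_seqset a j; have := card_seqset j.+2 b.
by case: (s j.+1 \in seqset s a j) => /=; lia.
Qed.

End Seqset.

Lemma setDU1_subset (T : finType) (A B : {set T}) x : (A :|: (x |: B)) :\ x \subset A :|: B.
Proof. by apply/subsetP => y; rewrite !inE => /andP [/negPf -> //]. Qed.

Section Graph.
Variables (T : finType) (e : rel T).
Hypotheses (esym : forall x y, e x y = e y x) (eirr : forall x, ~~ e x x).

Lemma GammaP (A : {set T}) x : reflect (forall y, y \in A -> e y x) (x \in Gamma e A).
Proof.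
rewrite inE; apply: (iffP forallP) => [H y yA | H y]; first by move: (H y); rewrite yA.
by apply/implyP => /H.
Qed.

Lemma GammaU (A B : {set T}) : Gamma e (A :|: B) = Gamma e A :&: Gamma e B.
Proof.
apply/setP => x; rewrite in_setI; apply/GammaP/andP => [H | [/GammaP HA /GammaP HB] y].
  by split; apply/GammaP => y yA; apply: H; rewrite inE yA ?orbT.
by rewrite inE => /orP [/HA | /HB].
Qed.

Lemma in_Gamma1 x y : (y \in Gamma e [set x]) = e x y.
Proof. by apply/GammaP/idP => [-> | xy z /set1P ->]; rewrite ?inE. Qed.

Lemma GammaS (A B : {set T}) : A \subset B -> Gamma e B \subset Gamma e A.
Proof.
move=> /subsetP AB; apply/subsetP => x /GammaP H; apply/GammaP => y /AB; exact: H.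
Qed.

Lemma Gamma_notin (A : {set T}) x : x \in Gamma e A -> x \notin A.
Proof. by move/GammaP => H; apply/negP => /H; rewrite (negbTE (eirr x)). Qed.

Lemma independentS (A B : {set T}) : A \subset B -> independent e B -> independent e A.
Proof. by move=> /subsetP AB indB x y /AB xB /AB; apply: indB. Qed.

Lemma cliqueP (A : {set T}) :
  reflect (forall x y, x \in A -> y \in A -> x != y -> e x y) (clique e A).
Proof.
apply: (iffP forallP) => [H x y xA yA xy | H x].
  by move: (H x); rewrite xA /= => /forallP /(_ y); rewrite yA xy.
by apply/implyP => xA; apply/forallP => y; apply/implyP => yA; apply/implyP; apply: H.
Qed.

Lemma clique_sub (A B : {set T}) : A \subset B -> clique e B -> clique e A.
Proof.
by move=> /subsetP AB /cliqueP cB; apply/cliqueP => x y /AB xB /AB; apply: cB.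
Qed.

Lemma clique_Gamma (A B : {set T}) x :
  clique e A -> x \in A -> B \subset A -> x \notin B -> x \in Gamma e B.
Proof.
move=> /cliqueP cA xA /subsetP BA xB; apply/GammaP => y yB.
by apply: cA => //; [exact: BA | apply: contraNneq xB => <-].
Qed.

Lemma card_Kcopy k (A : {set T}) : Kcopy e k A -> #|A| = k.
Proof. by case/andP => _ /eqP. Qed.

Lemma Kcopy_add k (A : {set T}) x : Kcopy e k A -> x \in Gamma e A -> Kcopy e k.+1 (x |: A).
Proof.
move=> /andP [/cliqueP cA /eqP cardA] xA; apply/andP; split; last first.
  by rewrite cardsU1 (Gamma_notin xA) cardA.
move/GammaP: xA => xA; apply/cliqueP => y z; rewrite !inE.
case/orP => [/eqP -> | yA]; case/orP => [/eqP -> | zA]; rewrite ?eqxx // => yz.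
- by rewrite esym; apply: xA.
- exact: xA.
- exact: cA.
Qed.

Lemma Kcopy_setD1 k (A : {set T}) a : Kcopy e k.+1 A -> a \in A -> Kcopy e k (A :\ a).
Proof.
move=> /andP [cA /eqP cardA] aA; apply/andP; split.
  by apply: clique_sub cA; apply: subsetDl.
by move: (cardsD1 a A); rewrite aA cardA => [[->]].
Qed.

Lemma Kcopy_Gamma k (A : {set T}) x : Kcopy e k A -> Kcopy e k.+1 (x |: A) -> x \in Gamma e A.
Proof.
move=> /andP [_ /eqP cardA] /andP [cxA /eqP cardxA].
have xA : x \notin A by move: cardxA; rewrite cardsU1 cardA; case: (x \in A) => /=; lia.
by apply: clique_Gamma cxA (setU11 x A) (subsetUr _ _) xA.
Qed.

Notation kconnected k := (clos_refl_trans _ (kstep e k)).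

Lemma kconnected_sym k A B : kconnected k A B -> kconnected k B A.
Proof.
elim=> [{}A {}B [KA [KB [D [KD [AD BD]]]]] | {}A | A' B' C' _ IH1 _ IH2].
- by apply: rt_step; split; [|split]; last exists D.
- exact: rt_refl.
- exact: rt_trans IH2 IH1.
Qed.

Lemma kcomponent_memE k C A : kcomponent e k C -> A \in C ->
  forall B, B \in C <-> kconnected k A B.
Proof.
move=> [A0 [K0 memC]] /memC [_ A0A] B; rewrite memC; split=> [[_ A0B] | AB].
  exact: rt_trans (kconnected_sym A0A) A0B.
by split=> //; apply: rt_trans A0A AB.
Qed.

Lemma kcomponent_Kcopy k C A : kcomponent e k C -> A \in C -> Kcopy e k A.
Proof.
move=> [A0 [K0 memC]] /memC [_ r].
by case: {r}(clos_rt_rtn1 _ _ _ _ r) => [|B {}A [_ []]].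
Qed.

Lemma kcomponent_eq k C1 C2 A : kcomponent e k C1 -> kcomponent e k C2 ->
  A \in C1 -> A \in C2 -> C1 = C2.
Proof.
move=> HC1 HC2 AC1 AC2; apply/setP => B; apply/idP/idP.
- by move=> /(kcomponent_memE HC1 AC1 B) /(kcomponent_memE HC2 AC2 B).
- by move=> /(kcomponent_memE HC2 AC2 B) /(kcomponent_memE HC1 AC1 B).
Qed.

Lemma kcomponent_swap k C (S : {set T}) p q :
  kcomponent e k.+1 C -> Kcopy e k S -> p \in Gamma e S -> q \in Gamma e S -> e p q ->
  p |: S \in C -> q |: S \in C.
Proof.
move=> HC KS pS qS pq pSC; apply/(kcomponent_memE HC pSC); apply: rt_step.
have qpS : q \in Gamma e (p |: S) by rewrite GammaU in_setI in_Gamma1 pq.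
split; [exact: Kcopy_add | split; first exact: Kcopy_add].
exists (q |: (p |: S)); split; first by apply: Kcopy_add qpS; apply: Kcopy_add.
by rewrite subsetUr setUS // subsetUr.
Qed.

Lemma dagger1_k2_witness n C (R : {set T}) a b c d : kcomponent e n.+2 C -> #|R| = n ->
  a |: (b |: R) \in C ->
  Kcopy e n.+2 (a |: (c |: R)) -> a |: (c |: R) \notin C ->
  Kcopy e n.+2 (b |: (d |: R)) -> b |: (d |: R) \notin C -> dagger1_k2 e n.+2.
Proof.
move=> HC cardR abC Kac acC Kbd bdC.
(* position 0 is padding: the configuration is indexed from 1 *)
pose s m := nth a [:: a, a, b & enum R] m.
have sR : seqset s 3 n.+2 = R.
  rewrite seqsetE /index_iota.
  have -> : n.+3 - 3 = n by lia.
  rewrite map_nth_iota; last by rewrite [size _]/= !subSS subn0 -cardE cardR.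
  by rewrite [drop _ _]/= drop0 take_oversize ?set_enum // -cardE cardR.
have sab : seqset s 1 n.+2 = a |: (b |: R).
  by rewrite (@seqset_consl _ s 1) // (@seqset_consl _ s 2) // sR.
exists s, c, d, C; rewrite sab sR; split=> //.
by split=> //; apply: kcomponent_Kcopy HC abC.
Qed.

Section Straddling.
Variables (n : nat) (u v w : T) (C1 C2 : {set {set T}}).
Hypotheses (euv : e u v) (HC1 : kcomponent e n.+2 C1) (HC2 : kcomponent e n.+2 C2).
Hypotheses (C12 : C1 != C2) (no_dagger : ~ dagger1_k2 e n.+2).

Definition straddles (S : {set T}) : Prop :=
  [/\ Kcopy e n.+1 S, v \in Gamma e S, u |: S \in C1 & w |: S \in C2].

Lemma straddles_Gamma S : straddles S -> u \in Gamma e S /\ w \in Gamma e S.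
Proof.
case=> KS _ uSC1 wSC2; split; apply: Kcopy_Gamma KS _.
  exact: kcomponent_Kcopy HC1 uSC1.
exact: kcomponent_Kcopy HC2 wSC2.
Qed.

Lemma straddles_exchange S a b : straddles S -> a \in S ->
  b \in Gamma e (S :\ a :|: [set w; u; v]) -> straddles (b |: (S :\ a)).
Proof.
move=> hS aS; have [uS wS] := straddles_Gamma hS; case: hS => KS vS uSC1 wSC2.
set R := S :\ a.
rewrite !GammaU !in_setI !in_Gamma1 => /andP [bR /andP [/andP [wb ub] vb]].
have defS : S = a |: R by rewrite setD1K.
have KR : Kcopy e n R := Kcopy_setD1 KS aS.
have GR : {subset Gamma e S <= Gamma e R} by apply/subsetP/GammaS/subsetDl.
have aR : a \in Gamma e R by apply: Kcopy_Gamma KR _; rewrite -defS.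
have [au av] : e a u /\ e a v by split; [move/GammaP: uS | move/GammaP: vS]; apply.
have KuR : Kcopy e n.+1 (u |: R) := Kcopy_add KR (GR u uS).
have Gu y : (y \in Gamma e (u |: R)) = e u y && (y \in Gamma e R).
  by rewrite GammaU in_setI in_Gamma1.
have auRC1 : a |: (u |: R) \in C1 by rewrite setUCA -defS.
have auR : a \in Gamma e (u |: R) by rewrite Gu esym au.
have vuR : v \in Gamma e (u |: R) by rewrite Gu euv GR.
have buR : b \in Gamma e (u |: R) by rewrite Gu ub.
have vuRC1 := kcomponent_swap HC1 KuR auR vuR av auRC1.
have buRC1 := kcomponent_swap HC1 KuR vuR buR vb vuRC1.
have bwRC2 : w |: (b |: R) \in C2.
  apply/negPn/negP => bwR_notin; apply: no_dagger.
  have aRE x : a |: (x |: R) = x |: S by rewrite setUCA -defS.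
  apply: (dagger1_k2_witness (a := a) (b := w) (c := u) (d := b) HC2 (card_Kcopy KR));
    rewrite ?aRE //.
  - exact: kcomponent_Kcopy HC1 uSC1.
  - by apply: contra_neqN C12 => /(kcomponent_eq HC1 HC2 uSC1).
  - by apply: Kcopy_add; [apply: Kcopy_add | rewrite GammaU in_setI in_Gamma1 esym wb GR].
split=> //; first exact: Kcopy_add.
- by rewrite GammaU in_setI in_Gamma1 esym vb GR.
- by rewrite setUCA.
Qed.

Lemma straddles_Gamma_notin S z : straddles S -> z \notin Gamma e (S :|: [set u; w]).
Proof.
move=> hS; have [uS wS] := straddles_Gamma hS; case: hS => KS _ uSC1 wSC2.
rewrite !GammaU !in_setI !in_Gamma1; apply/negP => /andP [zS /andP [uz wz]].
have zSC1 := kcomponent_swap HC1 KS uS zS uz uSC1.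
have zw : e z w by rewrite esym.
have wSC1 := kcomponent_swap HC1 KS zS wS zw zSC1.
by move/eqP: C12; apply; apply: kcomponent_eq HC1 HC2 wSC1 wSC2.
Qed.

Lemma straddles_independent S a : straddles S -> a \in S ->
  independent e (Gamma e (S :\ a :|: [set w; u; v])).
Proof.
move=> hS aS y z yG zG; apply/negP => yz.
have := @straddles_Gamma_notin _ z (straddles_exchange hS aS yG).
rewrite -setUA GammaU in_setI in_Gamma1 yz /=; apply/negP/negPn.
apply: subsetP zG; apply/GammaS/setUS/subsetP => x; rewrite !inE.
by case/orP => ->; rewrite ?orbT.
Qed.

Lemma straddles_replace_prefix (uu x : nat -> T) m :
  m <= n.+1 -> straddles (seqset uu 1 n.+1) -> Kcopy e m (seqset x 1 m) ->
  (forall j, 1 <= j <= m -> x j \in Gamma e (seqset uu j.+1 n.+1 :|: [set w; u; v])) ->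
  forall j, j <= m -> straddles (seqset x 1 j :|: seqset uu j.+1 n.+1).
Proof.
move=> mn hf /andP [cliqueX /eqP cardX] Gx; elim=> [_ | j IH jm].
  by rewrite seqset0 // set0U.
set S := seqset x 1 j :|: seqset uu j.+1 n.+1.
have defS : S = seqset x 1 j :|: (uu j.+1 |: seqset uu j.+2 n.+1).
  by rewrite /S (@seqset_consl _ uu j.+1) //; lia.
have aS : uu j.+1 \in S by rewrite defS !inE eqxx orbT.
have RS : S :\ uu j.+1 \subset seqset x 1 j :|: seqset uu j.+2 n.+1.
  by rewrite defS setDU1_subset.
have xG : x j.+1 \in Gamma e (S :\ uu j.+1 :|: [set w; u; v]).
  apply: (subsetP (GammaS (setSU _ RS))).
  rewrite -setUA GammaU in_setI Gx ?andbT; last lia.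
  have xX : x j.+1 \notin seqset x 1 j.
    by apply: (@seqset_notin _ x 1 m); rewrite ?cardX; lia.
  apply: clique_Gamma cliqueX _ (seqsetS _ _ _) xX; try lia.
  by apply/seqsetP; exists j.+1 => //; lia.
have hS' := straddles_exchange (IH (ltnW jm)) aS xG.
suff <- : x j.+1 |: (S :\ uu j.+1) = seqset x 1 j.+1 :|: seqset uu j.+2 n.+1 by [].
apply/eqP; rewrite eqEcard; apply/andP; split.
  by rewrite (@seqset_rconsr _ x 1) // -setUA setUS.
case: hS' => /card_Kcopy -> _ _ _; apply: leq_trans (leq_card_setU _ _).1 _.
by have := card_seqset x 1 j.+1; have := card_seqset uu j.+2 n.+1; lia.
Qed.

Lemma straddles_seqset_independent (X : {set T}) (uu : nat -> T) i :
  i <= n.+1 -> straddles (X :|: seqset uu i n.+1) ->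
  independent e (Gamma e (X :|: seqset uu i.+1 n.+1 :|: [set w; u; v])).
Proof.
move=> iN hS; have defU := @seqset_consl _ uu i n.+1 iN.
apply: independentS (straddles_independent hS (a := uu i) _); last first.
  by rewrite defU !inE eqxx orbT.
by apply/GammaS/setSU; rewrite defU setDU1_subset.
Qed.

End Straddling.

End Graph.

Theorem lemma5p3 (T : finType) (e : rel T) (k i : nat)
  (uu : nat -> T) (C1 C2 : {set {set T}}) (u v w : T) :
  simple_graph e ->
  2 <= k -> 1 <= i <= k.-1 ->
  ~ dagger1_k2 e k ->
  kcomponent e k C1 -> kcomponent e k C2 -> C1 != C2 ->
  Kcopy e k.-1 (seqset uu 1 k.-1) ->
  Kminus_of e k C1 (seqset uu 1 k.-1) ->
  Kminus_of e k C2 (seqset uu 1 k.-1) ->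
  e u v ->
  [forall y in seqset uu 1 k.-1, e y u] -> ext (seqset uu 1 k.-1) u \in C1 ->
  [forall y in seqset uu 1 k.-1, e y v] -> ext (seqset uu 1 k.-1) v \in C1 ->
  [forall y in seqset uu 1 k.-1, e y w] -> ext (seqset uu 1 k.-1) w \in C2 ->
  (* (i) *)
  independent e
    (Gamma e (seqset uu 1 i.-1 :|: seqset uu i.+1 k.-1 :|: [set w; u; v]))
  /\
  (* (ii) *)
  (forall x : nat -> T,
     Kcopy e i.-1 (seqset x 1 i.-1) ->
     (forall j, 1 <= j < i ->
        x j \in Gamma e (seqset uu j.+1 k.-1 :|: [set w; u; v])) ->
     independent e
       (Gamma e (seqset x 1 i.-1 :|: seqset uu i.+1 k.-1 :|: [set w; u; v]))).
Proof.
move=> [esym eirr] k2; have [n ->] : exists n, k = n.+2 by exists (k - 2); lia.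
(* The two [Kminus_of] hypotheses are implied by [uC1] and [wC2]. *)
case: i => // m /andP [_ mn] no_dagger HC1 HC2 C12 Kf _ _ euv _ uC1 Fv _ _ wC2.
have hf : straddles e n u v w C1 C2 (seqset uu 1 n.+1) by split; rewrite ?inE.
have indep := straddles_seqset_independent (w := w) esym eirr euv HC1 HC2 C12 no_dagger.
split.
  by apply: (indep _ _ _ mn); rewrite -(@seqset_split _ uu 1 m); [exact: hf | lia].
move=> x Kx Gx; apply: (indep _ _ _ mn).
exact: (straddles_replace_prefix esym eirr euv HC1 HC2 C12 no_dagger (ltnW mn) hf Kx Gx).
Qed.
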